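(* Let $R$ be a commutative ring and let $G=\{g_1=e,g_2,\dots,g_n\}$ be a finite group of order $n>1$ with this fixed listing of its elements. Then $\sigma(v)$ is symmetric for every $v\in RG$ if and only if $G$ is an abelian group of exponent $2$.
   Context: For $v=\sum_{g\in G}\alpha_g g\in RG$, $\sigma(v)$ is the $n\times n$ matrix over $R$ whose $(i,j)$ entry is $\alpha_{g_i^{-1}g_j}$. *)

From HB Require Import structures.
From mathcomp Require Import all_boot all_order all_algebra all_fingroup.
Set Implicit Arguments. Unset Strict Implicit. Unset Printing Implicit Defensive.
Import GRing.Theory.
Local Open Scope ring_scope.

(* An element v = \sum_g alpha_g g of the group ring RG is represented by its
   coefficient function alpha : {ffun gT -> R}. *)
Definition sigma (R : nzRingType) (gT : finGroupType) (n : nat)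
  (g : 'I_n -> gT) (v : {ffun gT -> R}) : 'M[R]_n :=
  \matrix_(i < n, j < n) v ((g i)^-1 * g j)%g.

From HB Require Import structures.
From mathcomp Require Import all_boot all_order all_algebra all_fingroup all_solvable.
Set Implicit Arguments. Unset Strict Implicit. Unset Printing Implicit Defensive.
Import GRing.Theory.
Local Open Scope ring_scope.

(* The transpose of sigma(v) has (i,j) entry v(g_j^-1 g_i) = v((g_i^-1 g_j)^-1),
   so sigma(v) is symmetric for every v exactly when inversion is the identity
   (test with the indicator v of a single element x, in row g_1 = 1).  A group
   in which every element is its own inverse has exponent dividing 2, hence is
   elementary abelian, and its exponent is exactly 2 once it is nontrivial. *)

Lemma invg_id_exponent_dvdn2 (gT : finGroupType) :
  (forall x : gT, (x^-1)%g = x) <-> (exponent [set: gT] %| 2)%N.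
Proof.
split=> [invg_id | /exponentP exp2 x].
- by apply/exponentP=> x _; rewrite expgS expg1 -{1}(invg_id x) mulVg.
- by apply/eqP; rewrite eq_invg_mul -expg2 exp2 ?inE.
Qed.

Lemma exponent_dvdn2_nontrivial (gT : finGroupType) :
  [set: gT] != 1%g ->
  (exponent [set: gT] %| 2)%N <-> abelian [set: gT] /\ exponent [set: gT] = 2%N.
Proof.
rewrite trivg_exponent => exp_ndvd1.
split=> [exp_dvd2 | [_ ->] //].
split; first exact/(abelem_abelian (exponent2_abelem exp_dvd2)).
by move: exp_dvd2 exp_ndvd1; case: (exponent _) => [|[|[|k]]].
Qed.

Lemma sigma_symmetricP (R : nzRingType) (gT : finGroupType) (n : nat)
    (g : 'I_n -> gT) (i0 : 'I_n) :
  g i0 = 1%g -> bijective g ->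
  (forall v : {ffun gT -> R}, (sigma g v)^T = sigma g v) <->
  (forall x : gT, (x^-1)%g = x).
Proof.
move=> g_i0 [ginv _ ginvK].
split=> [sym_sigma x | invg_id v]; last first.
  by apply/matrixP=> i j; rewrite !mxE -{1}(invg_id (_ * _)%g) invMg invgK.
pose delta_x : {ffun gT -> R} := [ffun y => (y == x)%:R].
have := congr1 (fun M : 'M[R]_n => M i0 (ginv x)) (sym_sigma delta_x).
rewrite !mxE !ffunE ginvK g_i0 invg1 mulg1 mul1g eqxx.
by case: eqP => // _ /esym/eqP; rewrite oner_eq0.
Qed.

Theorem mainTheorem4 (R : comNzRingType) (gT : finGroupType) (n : nat)
  (g : 'I_n -> gT)
  (hn : (1 < n)%N)
  (hbij : bijective g)
  (he : forall i : 'I_n, nat_of_ord i = 0%N -> g i = 1%g) :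
  (forall v : {ffun gT -> R}, (sigma g v)^T = sigma g v) <->
  (abelian [set: gT] /\ exponent [set: gT] = 2%N).
Proof.
pose i0 : 'I_n := Ordinal (ltnW hn).
pose i1 : 'I_n := Ordinal hn.
have g_i0 : g i0 = 1%g by apply: he.
have ntG : [set: gT] != 1%g.
  apply/trivgPn; exists (g i1); rewrite ?inE // -g_i0.
  by rewrite (inj_eq (bij_inj hbij)).
apply: iff_trans (sigma_symmetricP R g_i0 hbij) _.
apply: iff_trans (invg_id_exponent_dvdn2 gT) _.
exact: exponent_dvdn2_nontrivial.
Qed.
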